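(* Let $X$ be a nonempty set, $G\le S_X$, and let $(G,(\lambda_x:x\in X/G))$ and $(G,(\kappa_x:x\in X/G))$ be rack envelopes (resp. quandle envelopes). For every $x\in X/G$ and $y\in xG$ let $g_y\in G$ be such that $xg_y=y$. Then the corresponding racks (resp. quandles) $\mathbf R(G,(\lambda_x))$ and $\mathbf R(G,(\kappa_x))$ are isomorphic if and only if there is $f\in N_{S_X}(G)$ such that $$\kappa_x=((\lambda_{yg_y^{-1}})^{g_y})^f$$ for every $x\in X/G$, where $y=xf^{-1}$.
   Context: Permutations act on the right ($xf$ is the image of $x$ under $f$; $fg$ means $f$ first, then $g$); $g^f=f^{-1}gf$, $f^G=\{f^g:g\in G\}$. For $G\le S_X$, $xG$ is the orbit of $x$, $G_x$ its stabilizer, $X/G$ a fixed complete set of orbit representatives; $C_G(H)$, $N_G(H)$, $Z(H)$ denote centralizer, normalizer and center. A left quasigroup is a groupoid $(X,* )$ whose left translations $L_x$ ($yL_x=x*y$) are bijections; a rack is a left quasigroup with $x*(y*z)=(x*y)*(x*z)$; a quandle is a rack with $x*x=x$; $\mathrm{LMlt}(X,* )=\langle L_x:x\in X\rangle$. A pair $(G,(\lambda_x:x\in X/G))$ with $G\le S_X$ is a rack envelope (resp. quandle envelope) if $\lambda_x\in C_G(G_x)$ (resp. $\lambda_x\in Z(G_x)$) for every $x\in X/G$ and $\langle\bigcup_{x\in X/G}\lambda_x^G\rangle=G$. The rack corresponding to such an envelope is $\mathbf R(G,\Lambda)=(X,* )$ defined by $L_y=(\lambda_x)^{g}$ whenever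 $x\in X/G$, $y\in xG$ and $g\in G$ with $xg=y$ (independent of the choice of $g$); its left multiplication group is $G$. *)

(* Convention (paper): permutations act on the right, x f = f x here,
   and "f g" (f first, then g) is the function g \o f.
   Conjugation h = g^f = f^{-1} g f is expressed without inverses by
   is_conj g f h  :<->  forall z, h (f z) = f (g z). *)
From mathcomp Require Import ssreflect ssrfun ssrbool.

Set Implicit Arguments.
Unset Strict Implicit.
Unset Printing Implicit Defensive.

Section Defs.
Variable X : Type.

Definition is_conj (g f h : X -> X) : Prop := forall z, h (f z) = f (g z).

Definition commute_fun (f g : X -> X) : Prop := forall z, f (g z) = g (f z).

Definition is_perm_group (G : (X -> X) -> Prop) : Prop :=
  [/\ (forall g, G g -> bijective g),
      G id,
      (forall g h, G g -> G h -> G (h \o g)) &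
      (forall g, G g -> exists h, [/\ G h, cancel g h & cancel h g])].

Definition in_orbit (G : (X -> X) -> Prop) (x y : X) : Prop :=
  exists g, G g /\ g x = y.

Definition in_stab (G : (X -> X) -> Prop) (x : X) (g : X -> X) : Prop :=
  G g /\ g x = x.

Definition orbit_transversal (G : (X -> X) -> Prop) (T : X -> Prop) : Prop :=
  (forall y, exists x, T x /\ in_orbit G x y) /\
  (forall x x', T x -> T x' -> in_orbit G x x' -> x = x').

Definition generated (S : (X -> X) -> Prop) (f : X -> X) : Prop :=
  forall H, is_perm_group H -> (forall s, S s -> H s) -> H f.

Definition conj_classes_of (G : (X -> X) -> Prop) (T : X -> Prop)
  (lam : X -> (X -> X)) (s : X -> X) : Prop :=
  exists x g, [/\ T x, G g & is_conj (lam x) g s].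

Definition in_centralizer_stab (G : (X -> X) -> Prop) (x : X) (l : X -> X) : Prop :=
  G l /\ (forall s, in_stab G x s -> commute_fun l s).

Definition in_center_stab (G : (X -> X) -> Prop) (x : X) (l : X -> X) : Prop :=
  in_stab G x l /\ (forall s, in_stab G x s -> commute_fun l s).

Definition rack_envelope (G : (X -> X) -> Prop) (T : X -> Prop)
  (lam : X -> (X -> X)) : Prop :=
  (forall x, T x -> in_centralizer_stab G x (lam x)) /\
  (forall f, generated (conj_classes_of G T lam) f <-> G f).

Definition quandle_envelope (G : (X -> X) -> Prop) (T : X -> Prop)
  (lam : X -> (X -> X)) : Prop :=
  (forall x, T x -> in_center_stab G x (lam x)) /\
  (forall f, generated (conj_classes_of G T lam) f <-> G f).

(* op is the rack R(G, lam): op y z = y * z = z L_y, with L_y = (lam_x)^g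
   whenever x \in X/G, g \in G, x g = y. *)
Definition rack_of (G : (X -> X) -> Prop) (T : X -> Prop)
  (lam : X -> (X -> X)) (op : X -> X -> X) : Prop :=
  forall x g y, T x -> G g -> g x = y -> is_conj (lam x) g (op y).

Definition groupoid_iso (op1 op2 : X -> X -> X) : Prop :=
  exists phi : X -> X, bijective phi /\
    forall a b, phi (op1 a b) = op2 (phi a) (phi b).

Definition in_sym_normalizer (G : (X -> X) -> Prop) (f : X -> X) : Prop :=
  bijective f /\ (forall g h, is_conj g f h -> (G g <-> G h)).

(* the condition of Proposition 3.5: kappa_x = ((lambda_{y g_y^{-1}})^{g_y})^f,
   y = x f^{-1}, for every x \in X/G *)
Definition envelope_transport (T : X -> Prop)
  (gy : X -> (X -> X)) (lam kap : X -> (X -> X)) (f : X -> X) : Prop :=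
  forall x y w, T x -> f y = x -> gy y w = y ->
    exists h, is_conj (lam w) (gy y) h /\ is_conj h f (kap x).

End Defs.

(* An isomorphism phi : R(G, lam) -> R(G, kap) conjugates left translations
   to left translations, L2_(a phi) = (L1_a)^phi.  Both families of left
   translations generate G, so conjugation by phi maps G into itself and,
   applied to the inverse isomorphism, onto itself: phi normalizes G.
   Evaluating at a representative x gives kap_x = L2_x = (L1_y)^phi with
   y = x phi^-1, and L1_y = lam_r^(g_y) for the representative r of y.
   Conversely, f in N(G) conjugates the G-action on the first rack to the
   G-action on the second; as both racks are G-equivariant and f carries
   L1_y to kap_(yf) = L2_(yf) at the representatives, it carries every L1_a
   to L2_(af). *)
From mathcomp Require Import ssreflect ssrfun ssrbool.
From Stdlib Require Import FunctionalExtensionality.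

Set Implicit Arguments.
Unset Strict Implicit.

Lemma can_morph2 (X : Type) (phi psi : X -> X) (op1 op2 : X -> X -> X) :
  cancel phi psi -> cancel psi phi ->
  {morph phi : a b / op1 a b >-> op2 a b} ->
  {morph psi : a b / op2 a b >-> op1 a b}.
Proof. by move=> phiK psiK hom a b; rewrite -{1}(psiK a) -{1}(psiK b) -hom phiK. Qed.

Section PermGroup.
Variables (X : Type) (G : (X -> X) -> Prop).
Hypothesis pG : is_perm_group G.

Lemma perm_group_surj (g : X -> X) : G g -> forall z, exists u, g u = z.
Proof.
case: pG => bij _ _ _ Gg z; case: (bij g Gg) => g' _ g'K.
by exists (g' z).
Qed.

Lemma perm_group_inj (g : X -> X) : G g -> injective g.
Proof. by case: pG => bij _ _ _ Gg; apply: bij_inj (bij g Gg). Qed.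

Lemma perm_group_inv (g : X -> X) :
  G g -> exists h, [/\ G h, cancel g h & cancel h g].
Proof. by case: pG => _ _ _; apply. Qed.

Lemma perm_group_comp (g h : X -> X) : G g -> G h -> G (h \o g).
Proof. by case: pG => _ _ comp _; apply: comp. Qed.

Lemma perm_group_conj (phi psi : X -> X) : cancel phi psi -> cancel psi phi ->
  is_perm_group (fun g => G (phi \o g \o psi)).
Proof.
move=> phiK psiK; case: pG => bij Gid _ _; split.
- move=> g Gg.
  have -> : g = psi \o (phi \o g \o psi) \o phi.
    by apply: functional_extensionality => z /=; rewrite !phiK.
  apply: bij_comp; first apply: bij_comp; [by exists phi | exact: bij | by exists psi].
- have -> : phi \o id \o psi = id by apply: functional_extensionality.
  exact: Gid.
- move=> g h Gg Gh.
  have -> : phi \o (h \o g) \o psi = (phi \o h \o psi) \o (phi \o g \o psi).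
    by apply: functional_extensionality => z /=; rewrite phiK.
  exact: perm_group_comp.
- move=> g /perm_group_inv [k [Gk gK kK]].
  exists (psi \o k \o phi); split.
  + have -> : phi \o (psi \o k \o phi) \o psi = k.
      by apply: functional_extensionality => z /=; rewrite !psiK.
    exact: Gk.
  + by move=> z /=; have := gK (phi z); rewrite /= phiK => ->.
  + by move=> z /=; apply: (can_inj phiK); apply: kK.
Qed.

End PermGroup.

Lemma quandle_envelope_rack (X : Type) (G : (X -> X) -> Prop) T lam :
  quandle_envelope G T lam -> rack_envelope G T lam.
Proof. by case=> cent gen; split=> // x /cent [[Gl _] comm]. Qed.

Section RackOf.
Variables (X : Type) (G : (X -> X) -> Prop) (T : X -> Prop).
Variables (lam : X -> X -> X) (op : X -> X -> X).
Hypotheses (pG : is_perm_group G) (trT : orbit_transversal G T).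
Hypothesis opR : rack_of G T lam op.

Lemma rack_of_rep x z : T x -> op x z = lam x z.
Proof. by case: pG => _ Gid _ _ Tx; have := opR Tx Gid erefl z. Qed.

Lemma rack_of_equivariant (g : X -> X) a z : G g -> op (g a) (g z) = g (op a z).
Proof.
move=> Gg; have [r [Tr [k [Gk kr]]]] := trT.1 a.
have [u <-] := perm_group_surj pG Gk z.
have Ggk := perm_group_comp pG Gk Gg.
by rewrite (opR Tr Ggk (congr1 g kr) u) (opR Tr Gk kr u).
Qed.

Lemma rack_of_translation_in_group a :
  (forall x, T x -> G (lam x)) -> G (op a).
Proof.
move=> Glam; have [r [Tr [k [Gk kr]]]] := trT.1 a.
have [k' [Gk' kK k'K]] := perm_group_inv pG Gk.
have -> : op a = k \o (lam r \o k').
  by apply: functional_extensionality => z /=; rewrite -{1}(k'K z) (opR Tr Gk kr).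
by apply: perm_group_comp => //; apply: perm_group_comp => //; apply: Glam.
Qed.

Lemma conj_classes_of_translation (s : X -> X) :
  conj_classes_of G T lam s -> exists a, s = op a.
Proof.
case=> x [k [Tx Gk kx]]; exists (k x).
apply: functional_extensionality => z.
have [u <-] := perm_group_surj pG Gk z.
by rewrite kx (opR Tx Gk erefl u).
Qed.

End RackOf.

Section Isomorphism.
Variables (X : Type) (G : (X -> X) -> Prop) (T : X -> Prop).
Hypotheses (pG : is_perm_group G) (trT : orbit_transversal G T).

Lemma rack_iso_conj_group (lam1 lam2 o1 o2 : X -> X -> X) (phi psi : X -> X) :
  rack_envelope G T lam1 -> rack_envelope G T lam2 ->
  rack_of G T lam1 o1 -> rack_of G T lam2 o2 ->
  cancel phi psi -> cancel psi phi -> {morph phi : a b / o1 a b >-> o2 a b} ->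
  forall g, G g -> G (phi \o g \o psi).
Proof.
move=> [env1 gen1] [env2 _] o1R o2R phiK psiK hom g /gen1.
move/(_ (fun h => G (phi \o h \o psi)) (perm_group_conj pG phiK psiK)); apply.
move=> s /(conj_classes_of_translation pG o1R) [a ->].
have -> : phi \o o1 a \o psi = o2 (phi a).
  by apply: functional_extensionality => z /=; rewrite hom psiK.
by apply: (rack_of_translation_in_group pG trT o2R) => x /env2 [].
Qed.

Variables (gy : X -> X -> X) (lam kap : X -> X -> X) (op1 op2 : X -> X -> X).
Hypothesis gyP : forall x y, T x -> in_orbit G x y -> G (gy y) /\ gy y x = y.
Hypotheses (envL : rack_envelope G T lam) (envK : rack_envelope G T kap).
Hypotheses (op1R : rack_of G T lam op1) (op2R : rack_of G T kap op2).

Lemma rack_iso_normalizer (phi psi : X -> X) :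
  cancel phi psi -> cancel psi phi -> {morph phi : a b / op1 a b >-> op2 a b} ->
  in_sym_normalizer G phi.
Proof.
move=> phiK psiK hom; split; first by exists psi.
move=> g h ghK.
have hE : h = phi \o g \o psi.
  by apply: functional_extensionality => z /=; rewrite -{1}(psiK z) ghK.
have gE : g = psi \o h \o phi.
  by apply: functional_extensionality => z /=; rewrite ghK phiK.
split=> [Gg | Gh].
- by rewrite hE; apply: (rack_iso_conj_group envL envK op1R op2R phiK psiK hom).
- rewrite gE; apply: (rack_iso_conj_group envK envL op2R op1R psiK phiK) => //.
  exact: can_morph2 hom.
Qed.

Lemma rack_iso_transport (phi : X -> X) :
  {morph phi : a b / op1 a b >-> op2 a b} ->
  envelope_transport T gy lam kap phi.
Proof.
move=> hom x y w Tx phiy gyw.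
have [r [Tr ry]] := trT.1 y; have [Ggy gyr] := gyP Tr ry.
have -> : w = r by apply: (perm_group_inj pG Ggy); rewrite gyw gyr.
exists (op1 y); split; first exact: op1R Tr Ggy gyr.
by move=> z; rewrite -(rack_of_rep pG op2R _ Tx) -phiy -hom.
Qed.

Lemma envelope_transport_translation (f : X -> X) x y :
  envelope_transport T gy lam kap f -> T x -> f y = x ->
  forall u, op2 x (f u) = f (op1 y u).
Proof.
move=> trn Tx fy u; have [r [Tr ry]] := trT.1 y; have [Ggy gyr] := gyP Tr ry.
have [h [lamh hkap]] := trn x y r Tx fy gyr.
have [v <-] := perm_group_surj pG Ggy u.
by rewrite (rack_of_rep pG op2R _ Tx) hkap lamh (op1R Tr Ggy gyr).
Qed.

Lemma normalizer_transport_iso (f : X -> X) :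
  in_sym_normalizer G f -> envelope_transport T gy lam kap f ->
  {morph f : a b / op1 a b >-> op2 a b}.
Proof.
move=> [[f' fK f'K] nf] trn a z.
have [x [Tx [g [Gg gx]]]] := trT.1 (f a).
pose g' := f' \o g \o f.
have Gg' : G g' by apply: (nf g' g _).2 Gg => v; rewrite /g' /= f'K.
have fy : f (f' x) = x by rewrite f'K.
have g'y : g' (f' x) = a by rewrite /g' /= fy gx fK.
have [u <-] := perm_group_surj pG Gg' z.
rewrite -{1}g'y (rack_of_equivariant pG trT op1R _ _ Gg') /g' /= f'K.
rewrite -(envelope_transport_translation trn Tx fy) -gx.
by rewrite f'K (rack_of_equivariant pG trT op2R _ _ Gg).
Qed.

Lemma rack_iso_normalizer_transport :
  groupoid_iso op1 op2 <->
  exists f, in_sym_normalizer G f /\ envelope_transport T gy lam kap f.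
Proof.
split.
- case=> phi [[psi phiK psiK] hom]; exists phi.
  by split; [apply: (rack_iso_normalizer phiK psiK) | apply: rack_iso_transport].
- case=> f [nf trn]; exists f; split; first by case: nf.
  exact: normalizer_transport_iso.
Qed.

End Isomorphism.

Theorem proposition3p5 (X : Type) (G : (X -> X) -> Prop) (T : X -> Prop)
  (gy : X -> (X -> X)) (lam kap : X -> (X -> X)) :
  inhabited X ->
  is_perm_group G ->
  orbit_transversal G T ->
  (forall x y, T x -> in_orbit G x y -> G (gy y) /\ gy y x = y) ->
  (* rack envelopes *)
  (rack_envelope G T lam -> rack_envelope G T kap ->
   forall op1 op2, rack_of G T lam op1 -> rack_of G T kap op2 ->
   (groupoid_iso op1 op2 <->
    exists f, in_sym_normalizer G f /\ envelope_transport T gy lam kap f)) /\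
  (* quandle envelopes *)
  (quandle_envelope G T lam -> quandle_envelope G T kap ->
   forall op1 op2, rack_of G T lam op1 -> rack_of G T kap op2 ->
   (groupoid_iso op1 op2 <->
    exists f, in_sym_normalizer G f /\ envelope_transport T gy lam kap f)).
Proof.
move=> _ pG trT gyP; split.
- by move=> envL envK op1 op2 op1R op2R; apply: rack_iso_normalizer_transport.
- move=> /quandle_envelope_rack envL /quandle_envelope_rack envK op1 op2 op1R op2R.
  exact: rack_iso_normalizer_transport.
Qed.
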